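(* For every $t\ge 0$, every $k\ge1$ and every collection $\Omega$ of functions, $$\rho_0\bigl(\mathsf{TL}_{k+1}^{(t+k)}(\Omega)\bigr)\subseteq\rho_0\bigl(\mathsf{gwl}_k^{(t)}\bigr)\subseteq\rho_0\bigl(\mathsf{TL}_{k+1}^{(t+1)}(\Omega)\bigr).$$
   Context: Fix integers $n\ge 1$ and $\ell\ge 1$. A graph is a triple $G=(V_G,E_G,\mathrm{col}_G)$ with $V_G=[n]=\{1,\dots,n\}$, $E_G$ a set of unordered pairs of distinct vertices (undirected, no loops), and a vertex labelling $\mathrm{col}_G:V_G\to\mathbb R^\ell$. Let $\mathcal G$ be the set of all such graphs. Tensor language $\mathsf{TL}(\Omega)$: let $\Omega$ be a collection of functions, each of the form $f:\mathbb R^p\to\mathbb R$ for some $p\ge1$ depending on $f$. Expressions are generated by $\varphi::=\mathbf 1_{x=y}\mid \mathbf 1_{x\neq y}\mid E(x,y)\mid P_s(x)\mid \varphi\cdot\varphi\mid \varphi+\varphi\mid a\cdot\varphi\mid f(\varphi_1,\dots,\varphi_p)\mid \sum_x\varphi$, with $x,y$ index variables, $s\in[\ell]$, $a\in\mathbb R$, $f\in\Omega$ of arity $p$. Free variables: $\mathrm{free}(\mathbf 1_{x\,\mathrm{op}\,y})=\mathrm{free}(E(x,y))=\{x,y\}$, $\mathrm{free}(P_s(x))=\{x\}$; union of the components' free variables for $\cdot$, $+$, $f(\dots)$; $\mathrm{free}(a\cdot\varphi)=\mathrm{free}(\varphi)$; $\mathrm{free}(\sum_x\varphi)=\mathrm{free}(\varphi)\setminus\{x\}$.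 Semantics: for a graph $G$ and a valuation $\nu$ mapping variables to $V_G$: $[\![E(x,y)]\!]^\nu_G=1$ if $\nu(x)\nu(y)\in E_G$ and $0$ otherwise; $[\![P_s(x)]\!]^\nu_G=\mathrm{col}_G(\nu(x))_s$; $[\![\mathbf 1_{x\,\mathrm{op}\,y}]\!]^\nu_G=1$ if $\nu(x)\,\mathrm{op}\,\nu(y)$ and $0$ otherwise; $\cdot$, $+$, scalar multiplication and $f$ act on values; $[\![\sum_x\varphi]\!]^\nu_G=\sum_{v\in V_G}[\![\varphi]\!]^{\nu[x\mapsto v]}_G$. Summation depth $\mathrm{sd}$: $0$ for atoms, maximum over the components for $\cdot$, $+$, $f(\dots)$, $\mathrm{sd}(a\cdot\varphi)=\mathrm{sd}(\varphi)$, $\mathrm{sd}(\sum_x\varphi)=\mathrm{sd}(\varphi)+1$. $\mathsf{TL}_k(\Omega)$ is the set of expressions in which only variables from $\{x_1,\dots,x_k\}$ occur (free or bound; variables may be re-bound), and $\mathsf{TL}_k^{(t)}(\Omega)$ its subset of summation depth at most $t$. For a set $\mathcal L$ of expressions, $\rho_0(\mathcal L)$ is the set of pairs of graphs $(G,H)$ with $[\![\varphi]\!]_G=[\![\varphi]\!]_H$ for all closed (no free variables) $\varphi\in\mathcal L$. $k$-dimensional Weisfeiler–Leman ($k\ge1$): for $\mathbf v\in V_G^k$, $\mathsf{atp}_k(G,\mathbf v)$ records, for all $1\le i<j\le k$, whether $v_i=v_j$ and whether $v_iv_j\in E_G$, together with $\mathrm{col}_G(v_i)$ for all $i$. $\mathsf{wl}_k^{(0)}(G,\mathbf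 v)=\mathsf{atp}_k(G,\mathbf v)$, $\mathsf{wl}_k^{(t+1)}(G,\mathbf v)=\bigl(\mathsf{wl}_k^{(t)}(G,\mathbf v),\{\!\{(\mathsf{atp}_{k+1}(G,(v_1,\dots,v_k,u)),\mathsf{wl}_k^{(t)}(G,\mathbf v[u/1]),\dots,\mathsf{wl}_k^{(t)}(G,\mathbf v[u/k])):u\in V_G\}\!\}\bigr)$, where $\mathbf v[u/i]$ replaces the $i$-th entry by $u$ and $\{\!\{\cdot\}\!\}$ denotes a multiset; labels are compared as formal objects across graphs. $\mathsf{gwl}_k^{(t)}(G)=\{\!\{\mathsf{wl}_k^{(t)}(G,\mathbf v):\mathbf v\in V_G^k\}\!\}$ and $\rho_0(\mathsf{gwl}_k^{(t)})=\{(G,H):\mathsf{gwl}_k^{(t)}(G)=\mathsf{gwl}_k^{(t)}(H)\}$. *)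

From Stdlib Require Import Reals.
From mathcomp Require Import all_boot perm.

Set Implicit Arguments.
Unset Strict Implicit.
Unset Printing Implicit Defensive.

Record graph (n l : nat) := Graph {
  edge : rel 'I_n;
  edge_sym : symmetric edge;
  edge_irr : irreflexive edge;
  col : 'I_n -> 'I_l -> R
}.

(* variable x_{i+1} of the paper is the number i.  A function symbol    *)
Inductive tl (l : nat) : Type :=
| TEq   : nat -> nat -> tl l
| TNeq  : nat -> nat -> tl l
| TEdge : nat -> nat -> tl l
| TLab  : 'I_l -> nat -> tl l
| TMul  : tl l -> tl l -> tl l
| TAdd  : tl l -> tl l -> tl l
| TScal : R -> tl l -> tl l
| TApp  : forall p : nat, (('I_p -> R) -> R) -> ('I_p -> tl l) -> tl l
| TSum  : nat -> tl l -> tl l.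

Arguments TEq {l}. Arguments TNeq {l}. Arguments TEdge {l}.

Definition fun_collection := {p : nat & ('I_p -> R) -> R} -> Prop.

Fixpoint is_free (l : nat) (x : nat) (e : tl l) : Prop :=
  match e with
  | TEq y z | TNeq y z | TEdge y z => x = y \/ x = z
  | TLab _ y => x = y
  | TMul a b | TAdd a b => is_free x a \/ is_free x b
  | TScal _ a => is_free x a
  | TApp p _ args => exists i : 'I_p, is_free x (args i)
  | TSum y a => x <> y /\ is_free x a
  end.

Definition closed (l : nat) (e : tl l) : Prop := forall x, ~ is_free x e.

Fixpoint vars_lt (l : nat) (k : nat) (e : tl l) : Prop :=
  match e with
  | TEq y z | TNeq y z | TEdge y z => (y < k)%N /\ (z < k)%N
  | TLab _ y => (y < k)%N
  | TMul a b | TAdd a b => vars_lt k a /\ vars_lt k b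
  | TScal _ a => vars_lt k a
  | TApp p _ args => forall i : 'I_p, vars_lt k (args i)
  | TSum y a => (y < k)%N /\ vars_lt k a
  end.

Fixpoint uses_only (l : nat) (Omega : fun_collection) (e : tl l) : Prop :=
  match e with
  | TEq _ _ | TNeq _ _ | TEdge _ _ | TLab _ _ => True
  | TMul a b | TAdd a b => uses_only Omega a /\ uses_only Omega b
  | TScal _ a => uses_only Omega a
  | TApp p f args => Omega (existT _ p f) /\ forall i : 'I_p, uses_only Omega (args i)
  | TSum _ a => uses_only Omega a
  end.

Fixpoint sd (l : nat) (e : tl l) : nat :=
  match e with
  | TEq _ _ | TNeq _ _ | TEdge _ _ | TLab _ _ => 0
  | TMul a b | TAdd a b => maxn (sd a) (sd b)
  | TScal _ a => sd a
  | TApp p _ args => \max_(i < p) sd (args i)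
  | TSum _ a => (sd a).+1
  end.

Definition TL (l k t : nat) (Omega : fun_collection) (e : tl l) : Prop :=
  vars_lt k e /\ (sd e <= t)%N /\ uses_only Omega e.

Definition upd (n : nat) (nu : nat -> 'I_n) (x : nat) (v : 'I_n) : nat -> 'I_n :=
  fun y => if y == x then v else nu y.

Fixpoint eval (n l : nat) (G : graph n l) (nu : nat -> 'I_n) (e : tl l) : R :=
  match e with
  | TEq x y => if nu x == nu y then R1 else R0
  | TNeq x y => if nu x != nu y then R1 else R0
  | TEdge x y => if edge G (nu x) (nu y) then R1 else R0
  | TLab s x => col G (nu x) s
  | TMul a b => Rmult (eval G nu a) (eval G nu b)
  | TAdd a b => Rplus (eval G nu a) (eval G nu b)
  | TScal c a => Rmult c (eval G nu a)
  | TApp p f args => f (fun i => eval G nu (args i))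
  | TSum x a => \big[Rplus/R0]_(v : 'I_n) eval G (upd nu x v) a
  end.

(* rho_0(L): pairs of graphs agreeing on all closed expressions of L.
   For closed expressions the value does not depend on the valuation
   (and valuations exist since n >= 1). *)
Definition rho0_TL (n l : nat) (L : tl l -> Prop) (G H : graph n l) : Prop :=
  forall e, L e -> closed e -> forall nu : nat -> 'I_n, eval G nu e = eval H nu e.

Definition atp (n l k : nat) (G : graph n l) (v : {ffun 'I_k -> 'I_n}) :
  {ffun 'I_k * 'I_k -> bool * bool} * {ffun 'I_k -> {ffun 'I_l -> R}} :=
  ([ffun ij : 'I_k * 'I_k =>
      if (ij.1 < ij.2)%N then (v ij.1 == v ij.2, edge G (v ij.1) (v ij.2))
      else (false, false)],
   [ffun i => [ffun s => col G (v i) s]]).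

Definition ext (n k : nat) (v : {ffun 'I_k -> 'I_n}) (u : 'I_n) : {ffun 'I_k.+1 -> 'I_n} :=
  [ffun i => match unlift ord_max i with Some j => v j | None => u end].

Definition subst (n k : nat) (v : {ffun 'I_k -> 'I_n}) (i : 'I_k) (u : 'I_n) : {ffun 'I_k -> 'I_n} :=
  [ffun j => if j == i then u else v j].

(* wl_eq t G H v w  <->  wl_k^{(t)}(G, v) = wl_k^{(t)}(H, w) (as formal labels).
   Equality of the multisets {{ ... : u in V_G }} and {{ ... : u in V_H }}
   is expressed by a bijection sigma : V_G -> V_H matching equal entries. *)
Fixpoint wl_eq (n l k t : nat) (G H : graph n l) (v w : {ffun 'I_k -> 'I_n}) : Prop :=
  match t with
  | 0 => atp G v = atp H w
  | t'.+1 =>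
      wl_eq t' G H v w /\
      exists sigma : {perm 'I_n}, forall u : 'I_n,
        atp G (ext v u) = atp H (ext w (sigma u)) /\
        forall i : 'I_k, wl_eq t' G H (subst v i u) (subst w i (sigma u))
  end.

Definition gwl_eq (n l k t : nat) (G H : graph n l) : Prop :=
  exists pi : {perm {ffun 'I_k -> 'I_n}}, forall v, wl_eq t G H v (pi v).

From Pilot Require Import Defs.
From Stdlib Require Import Reals.
From HB Require Import structures.
From mathcomp Require Import all_boot perm boolp.

Set Implicit Arguments.
Unset Strict Implicit.
Unset Printing Implicit Defensive.

(* Upper inclusion: by induction on t, equal WL colours of k-tuples v, w give
   equal values to every expression of TL_{k+1}^{(t)} whose free variables are
   read off v and w.  Inside a sum over x only k of the k+1 variables are free,
   so the (k+1)-tuple (v, u) can be shrunk to v or to some v[u/i], whose colours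
   agree by the refinement step.  A sentence of depth t+1 is built from sums over
   a single vertex, i.e. sums over constant k-tuples, which the bijection of
   gwl preserves.

   Lower inclusion: expressions of TL_{k+1} with free variables among
   x_1..x_k, evaluated at the k-tuples of G and of H, form a unital algebra of
   real functions on the disjoint union of the two tuple sets; summing one of
   depth t over all k-tuples gives a sentence of depth t+k.  If every element
   of such an algebra has the same sum over both halves, products of affine functions
   yield the indicator of each class of inseparable points, so the two halves
   meet every class equally often and are matched by a bijection preserving all
   values.  Applied to tuples and, at each refinement step, to the extra vertex
   u, this gives equal WL colours by induction on t. *)

HB.instance Definition _ := Monoid.isComLaw.Build R R0 Rplus
  (fun x y z => esym (Rplus_assoc x y z)) Rplus_comm Rplus_0_l.

Lemma big_indicator (T : finType) (P : pred T) :
  \big[Rplus/R0]_(a : T) (if P a then R1 else R0) = INR #|P|.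
Proof.
rewrite -big_mkcond big_const.
by elim: #|_| => [|m IH] //; rewrite iterS IH S_INR Rplus_comm.
Qed.

Lemma count_mem_codom (T : finType) (K : eqType) (f : T -> K) (y : K) :
  count_mem y (codom f) = #|[pred a | f a == y]|.
Proof. by rewrite codomE count_map enumT cardE /enum_mem size_filter. Qed.

Lemma perm_eq_codom_perm (T : finType) (K : eqType) (f g : T -> K) :
  perm_eq (codom f) (codom g) -> exists s : {perm T}, forall a, g (s a) = f a.
Proof.
move=> /(@tuple_permP _ _ _ (codom_tuple g)) [p hp].
have s_inj : injective (fun a => enum_val (p (enum_rank a))).
  by move=> a b /enum_val_inj /perm_inj /enum_rank_inj.
exists (perm s_inj) => a; rewrite permE.
have /= := congr1 (fun s => nth (f a) s (enum_rank a)) hp.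
rewrite nth_codom enum_rankK => ->.
by rewrite (nth_map (enum_rank a)) ?size_enum_ord // nth_ord_enum (tnth_nth (f a)) nth_codom.
Qed.

Section SeparatingAlgebra.
Variables (T : finType) (A : (T + T -> R) -> Prop).
Hypotheses (A1 : A (fun=> R1))
  (AM : forall f g, A f -> A g -> A (fun s => Rmult (f s) (g s)))
  (AD : forall f g, A f -> A g -> A (fun s => Rplus (f s) (g s)))
  (AZ : forall c f, A f -> A (fun s => Rmult c (f s))).

Definition indist (x y : T + T) := forall f, A f -> f x = f y.

Lemma indicator_indist (x0 : T + T) :
  exists2 g, A g & forall z, g z = if `[< indist z x0 >] then R1 else R0.
Proof.
suff [g Ag hg] : exists2 g, A g & forall z,
    (indist z x0 -> g z = R1) /\ (z \in enum {: T + T} -> ~ indist z x0 -> g z = R0).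
  exists g => // z; have [hz1 hz0] := hg z.
  by case: asboolP => hz; [apply: hz1 | apply: hz0; rewrite ?mem_enum].
elim: (enum _) => [|y s [g Ag hg]]; first by exists (fun=> R1).
have [yx0|] := pselect (indist y x0).
  exists g => // z; have [hz1 hz0] := hg z; split=> // /predU1P [-> /(_ yx0) []|].
  exact: hz0.
move=> /existsNP [f /not_implyP [Af hf]].
(* multiply by the affine function of [f] that is 1 on the class of [x0] and 0 at [y] *)
pose c := Rinv (Rminus (f x0) (f y)).
exists (fun s => Rmult (g s) (Rmult c (Rplus (f s) (Rmult (- f y) R1)))).
  by apply: AM => //; apply: AZ; apply: AD => //; apply: AZ.
move=> z; have [hz1 hz0] := hg z; split.
  move=> zx0; rewrite hz1 // zx0 // Rmult_1_r Rmult_1_l /c Rmult_comm.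
  by apply: Rinv_r => /Rminus_diag_uniq /esym.
move=> /predU1P [-> _|zs zx0]; last by rewrite hz0 // Rmult_0_l.
by rewrite Rmult_1_r Rplus_opp_r !Rmult_0_r.
Qed.

Hypothesis A_sum : forall f, A f ->
  \big[Rplus/R0]_(a : T) f (inl a) = \big[Rplus/R0]_(a : T) f (inr a).

Lemma card_indist x0 :
  #|[pred a | `[< indist (inl a) x0 >]]| = #|[pred a | `[< indist (inr a) x0 >]]|.
Proof.
have [g Ag hg] := indicator_indist x0.
apply: INR_eq; rewrite -!big_indicator.
by under eq_bigr do rewrite -hg; under [RHS]eq_bigr do rewrite -hg; apply: A_sum.
Qed.

Lemma separating_algebra_perm :
  exists s : {perm T}, forall a f, A f -> f (inl a) = f (inr (s a)).
Proof.
pose cls x : {set T + T} := [set y | `[< indist x y >]].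
have clsE x y : (cls x == cls y) = `[< indist x y >].
  apply/eqP/asboolP => [/setP/(_ y)|xy].
    by rewrite !inE (@asboolT (indist y y)) // => /asboolP.
  apply/setP => z; rewrite !inE; apply/asboolP/asboolP => h f Af.
    by rewrite -(xy f Af) h.
  by rewrite (xy f Af) h.
have : perm_eq (codom (cls \o inl)) (codom (cls \o inr)).
  apply/allP => K _; rewrite /= !count_mem_codom; apply/eqP.
  case: (boolP [exists x, cls x == K]) => [/existsP [x0 /eqP <-]|/existsPn noK].
    rewrite (eq_card (fun a => clsE (inl a) x0)) (eq_card (fun a => clsE (inr a) x0)).
    exact: card_indist.
  by rewrite !eq_card0 // => a; apply/negbTE/noK.
move=> /perm_eq_codom_perm [s hs]; exists s => a f Af.
by have /eqP := hs a; rewrite clsE => /asboolP ->.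
Qed.

End SeparatingAlgebra.

Section Syntax.
Variables (n l : nat).
Implicit Types (G : graph n l) (e : tl l) (nu : nat -> 'I_n).

Lemma is_free_lt m e x : vars_lt m e -> is_free x e -> (x < m)%N.
Proof.
elim: e x => /=.
1-3: by move=> y z x [hy hz] [->|->].
- by move=> s y x hy ->.
- by move=> a IHa b IHb x [ha hb] [/IHa|/IHb]; auto.
- by move=> a IHa b IHb x [ha hb] [/IHa|/IHb]; auto.
- by move=> c a IHa x ha /IHa; auto.
- by move=> p f args IH x ha [i /IH]; auto.
- by move=> y a IHa x [hy ha] [_ /IHa]; auto.
Qed.

Lemma eq_eval_free G e nu nu' : (forall x, is_free x e -> nu x = nu' x) ->
  eval G nu e = eval G nu' e.
Proof.
elim: e nu nu' => /=.
1-3: by move=> y z nu nu' h; rewrite !h; auto.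
- by move=> s y nu nu' h; rewrite h.
- by move=> a IHa b IHb nu nu' h; rewrite (IHa nu nu') ?(IHb nu nu') //; auto.
- by move=> a IHa b IHb nu nu' h; rewrite (IHa nu nu') ?(IHb nu nu') //; auto.
- by move=> c a IHa nu nu' h; rewrite (IHa nu nu').
- move=> p f args IH nu nu' h; congr f; apply: funext => i.
  by apply: IH => x hx; apply: h; exists i.
- move=> y a IHa nu nu' h; apply: eq_bigr => v _; apply: IHa => x hx.
  by rewrite /upd; case: eqP => // /eqP hxy; apply: h; split => //; apply/eqP.
Qed.

Fixpoint rename (tau : nat -> nat) e : tl l :=
  match e with
  | TEq x y => TEq (tau x) (tau y)
  | TNeq x y => TNeq (tau x) (tau y)
  | TEdge x y => TEdge (tau x) (tau y)
  | TLab s x => TLab s (tau x)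
  | TMul a b => TMul (rename tau a) (rename tau b)
  | TAdd a b => TAdd (rename tau a) (rename tau b)
  | TScal c a => TScal c (rename tau a)
  | TApp p f args => TApp f (fun i => rename tau (args i))
  | TSum y a => TSum (tau y) (rename tau a)
  end.

Lemma eval_rename G tau e nu : injective tau ->
  eval G nu (rename tau e) = eval G (nu \o tau) e.
Proof.
move=> tau_inj; elim: e nu => //=.
- by move=> a IHa b IHb nu; rewrite IHa IHb.
- by move=> a IHa b IHb nu; rewrite IHa IHb.
- by move=> c a IHa nu; rewrite IHa.
- by move=> p f args IH nu; congr f; apply: funext => i; rewrite IH.
- move=> y a IHa nu; apply: eq_bigr => v _; rewrite IHa; congr eval.
  by apply: funext => x; rewrite /= /upd (inj_eq tau_inj).
Qed.

Lemma sd_rename tau e : sd (rename tau e) = sd e.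
Proof.
elim: e => //=; try by move=> a -> b ->.
- by move=> p f args IH; apply: eq_bigr => i _.
- by move=> y a ->.
Qed.

Lemma vars_lt_rename m tau e : (forall x, (x < m)%N -> (tau x < m)%N) ->
  vars_lt m e -> vars_lt m (rename tau e).
Proof.
move=> tau_m; elim: e => /=.
1-3: by move=> x y [/tau_m ? /tau_m ?].
- by move=> s x /tau_m.
- by move=> a IHa b IHb [/IHa ? /IHb ?].
- by move=> a IHa b IHb [/IHa ? /IHb ?].
- by move=> c a IHa /IHa.
- by move=> p f args IH h i; apply: IH.
- by move=> y a IHa [/tau_m ? /IHa ?].
Qed.

Lemma uses_only_rename Omega tau e : uses_only Omega e -> uses_only Omega (rename tau e).
Proof.
elim: e => //=; try by move=> a IHa b IHb [/IHa ? /IHb ?].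
by move=> p f args IH [Of h]; split => // i; apply: IH.
Qed.

Definition tval nu m (f : {ffun 'I_m -> 'I_n}) (x : nat) : 'I_n :=
  if insub x is Some i then f i else nu x.

Lemma tval_ord nu m (f : {ffun 'I_m -> 'I_n}) (i : 'I_m) : tval nu f i = f i.
Proof. by rewrite /tval valK. Qed.

Lemma tval_ge nu m (f : {ffun 'I_m -> 'I_n}) x : (m <= x)%N -> tval nu f x = nu x.
Proof. by move=> h; rewrite /tval insubF // ltnNge h. Qed.

Lemma tval_lt nu m (f : {ffun 'I_m -> 'I_n}) x (hx : (x < m)%N) : tval nu f x = f (Ordinal hx).
Proof. by rewrite -(tval_ord nu f (Ordinal hx)). Qed.

Lemma ext_lift m (v : {ffun 'I_m -> 'I_n}) u j : ext v u (lift ord_max j) = v j.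
Proof. by rewrite /ext ffunE liftK. Qed.

Lemma ext_max m (v : {ffun 'I_m -> 'I_n}) u : ext v u ord_max = u.
Proof. by rewrite /ext ffunE unlift_none. Qed.

Lemma tval_ext nu m (v : {ffun 'I_m -> 'I_n}) u : tval nu (ext v u) = upd (tval nu v) m u.
Proof.
apply: funext => x; rewrite /upd; case: (ltngtP x m) => [hx|hx|->].
- rewrite (tval_lt _ _ (leqW hx)) (tval_lt _ _ hx) -(ext_lift v u).
  by apply: congr1; apply: val_inj; rewrite /= /bump leqNgt hx.
- by rewrite !tval_ge // ltnW.
- by rewrite (tval_lt _ _ (ltnSn m)) -[RHS](ext_max v u); apply: congr1; apply: val_inj.
Qed.

Lemma big_ffun_ext (T : Type) (idx : T) (op : Monoid.com_law idx) m
    (F : {ffun 'I_m.+1 -> 'I_n} -> T) :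
  \big[op/idx]_(g : {ffun 'I_m.+1 -> 'I_n}) F g =
  \big[op/idx]_(f : {ffun 'I_m -> 'I_n}) \big[op/idx]_(u : 'I_n) F (ext f u).
Proof.
rewrite pair_big (reindex (fun p => ext p.1 p.2)) //=; apply: onW_bij.
exists (fun g : {ffun 'I_m.+1 -> 'I_n} => ([ffun j => g (lift ord_max j)], g ord_max)).
  by move=> [f u]; congr pair; [apply/ffunP => j; rewrite ffunE ext_lift | rewrite ext_max].
move=> g; apply/ffunP => i; rewrite /ext ffunE.
by case: unliftP => [j ->|->] //; rewrite ffunE.
Qed.

Fixpoint tsum_prefix (j : nat) e : tl l :=
  if j is j'.+1 then tsum_prefix j' (TSum j' e) else e.

Lemma eval_tsum_prefix G j e nu : eval G nu (tsum_prefix j e) =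
  \big[Rplus/R0]_(f : {ffun 'I_j -> 'I_n}) eval G (tval nu f) e.
Proof.
elim: j e => [|j IH] e /=.
  have tval0 (f : {ffun 'I_0 -> 'I_n}) : tval nu f = nu by apply: funext => x; rewrite tval_ge.
  by under eq_bigr do rewrite tval0; rewrite big_const card_ffun !card_ord /= Rplus_0_r.
rewrite IH big_ffun_ext; apply: eq_bigr => f _.
by apply: eq_bigr => u _; rewrite tval_ext.
Qed.

Lemma sd_tsum_prefix j e : sd (tsum_prefix j e) = (sd e + j)%N.
Proof. by elim: j e => [|j IH] e /=; rewrite ?addn0 // IH /= addSnnS. Qed.

Lemma vars_lt_tsum_prefix m j e : (j <= m)%N -> vars_lt m e -> vars_lt m (tsum_prefix j e).
Proof. by elim: j e => //= j IH e hj he; apply: IH; [exact: ltnW | split]. Qed.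

Lemma uses_only_tsum_prefix Omega j e : uses_only Omega e -> uses_only Omega (tsum_prefix j e).
Proof. by elim: j e => //= j IH e he; apply: IH. Qed.

Lemma is_free_tsum_prefix j e x : is_free x (tsum_prefix j e) -> is_free x e /\ (j <= x)%N.
Proof.
elim: j e => //= j IH e /IH [[xj hx] jx]; split => //.
by rewrite ltn_neqAle jx andbT eq_sym; apply/eqP.
Qed.

End Syntax.

Section AtomicType.
Variables (n l : nat).
Implicit Types (G H : graph n l).

Lemma atpP m G H (x y : {ffun 'I_m -> 'I_n}) :
  atp G x = atp H y <->
  (forall a b, (x a == x b) = (y a == y b) /\ edge G (x a) (x b) = edge H (y a) (y b)) /\
  (forall a s, col G (x a) s = col H (y a) s).
Proof.
split => [[e1 e2]|[hE hC]]; last first.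
  congr pair; apply/ffunP.
    by move=> [a b]; rewrite !ffunE /=; case: ifP => // _; have [-> ->] := hE a b.
  by move=> a; apply/ffunP => s; rewrite !ffunE.
have lt_case (a b : 'I_m) : (a < b)%N ->
    (x a == x b) = (y a == y b) /\ edge G (x a) (x b) = edge H (y a) (y b).
  move=> ab; have := congr1 (fun F : {ffun 'I_m * 'I_m -> bool * bool} => F (a, b)) e1.
  by rewrite !ffunE /= ab => -[-> ->].
split => [a b|a s]; last first.
  by have := congr1 (fun F : {ffun 'I_m -> {ffun 'I_l -> R}} => F a s) e2; rewrite !ffunE.
case: (ltngtP a b) => [/lt_case //|/lt_case [h1 h2]|/val_inj ->].
  by rewrite eq_sym h1 eq_sym edge_sym h2 edge_sym.
by rewrite !eqxx !edge_irr.
Qed.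

Lemma wl_eq_atp k t G H (v w : {ffun 'I_k -> 'I_n}) : wl_eq t G H v w -> atp G v = atp H w.
Proof. by elim: t => //= t IH [/IH]. Qed.

End AtomicType.

Lemma exists_notin_codom k (f : 'I_k -> 'I_k.+1) : exists p, p \notin codom f.
Proof.
case: (pickP [pred p | p \notin codom f]) => [p hp|all_in]; first by exists p.
have : (#|'I_k.+1| <= #|codom f|)%N.
  by apply/subset_leq_card/subsetP => p _; apply/negbFE/all_in.
by rewrite card_ord => /leq_trans/(_ (leq_image_card f 'I_k)); rewrite card_ord ltnn.
Qed.

Lemma big_const_tuple (T : Type) (idx : T) (op : Monoid.com_law idx) n m (i0 : 'I_m)
    (F : 'I_n -> T) :
  \big[op/idx]_(c : 'I_n) F c =
  \big[op/idx]_(v : {ffun 'I_m -> 'I_n} | [forall j, v j == v i0]) F (v i0).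
Proof.
rewrite (reindex (fun c : 'I_n => [ffun=> c])) /=.
  by apply: eq_big => [c|c _]; rewrite ?ffunE //; apply/esym/forallP => j; rewrite !ffunE.
exists (fun v : {ffun 'I_m -> 'I_n} => v i0) => [c _|v]; first by rewrite ffunE.
by rewrite inE => /forallP hv; apply/ffunP => j; rewrite ffunE; apply/esym/eqP/hv.
Qed.

Section UpperInclusion.
Variables (n l k : nat) (G H : graph n l) (i0 : 'I_k).

Definition same_eval m (x y : {ffun 'I_m -> 'I_n}) (e : tl l) :=
  forall (rho : nat -> 'I_m) nuG nuH,
  (forall z, is_free z e -> nuG z = x (rho z) /\ nuH z = y (rho z)) ->
  eval G nuG e = eval H nuH e.

Definition same_evals t m (x y : {ffun 'I_m -> 'I_n}) :=
  forall e, vars_lt k.+1 e -> (sd e <= t)%N -> same_eval x y e.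

Lemma same_evals_of_sums t m (x y : {ffun 'I_m -> 'I_n}) : atp G x = atp H y ->
  (forall z a, vars_lt k.+1 (TSum z a) -> (sd (TSum z a) <= t)%N ->
     same_eval x y (TSum z a)) ->
  same_evals t x y.
Proof.
move=> /atpP [hE hC] hsum; elim => /=.
1-3: move=> a b _ _ rho nuG nuH hf /=; have [-> ->] := hf a (or_introl erefl).
1-3: have [-> ->] := hf b (or_intror erefl).
1-3: by have [eqE edgeE] := hE (rho a) (rho b); rewrite ?eqE ?edgeE.
- by move=> s a _ _ rho nuG nuH hf /=; have [-> ->] := hf a erefl.
- move=> a IHa b IHb [va vb] /[!geq_max] /andP [sa sb] rho nuG nuH hf /=.
  by rewrite (IHa va sa rho nuG nuH) ?(IHb vb sb rho nuG nuH) // => z hz;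
    apply: hf => /=; tauto.
- move=> a IHa b IHb [va vb] /[!geq_max] /andP [sa sb] rho nuG nuH hf /=.
  by rewrite (IHa va sa rho nuG nuH) ?(IHb vb sb rho nuG nuH) // => z hz;
    apply: hf => /=; tauto.
- by move=> c a IHa va sa rho nuG nuH hf /=; rewrite (IHa va sa rho nuG nuH).
- move=> p f args IH va /bigmax_leqP sa rho nuG nuH hf /=; congr f; apply: funext => i.
  by apply: (IH i (va i) (sa i isT) rho) => z hz; apply: hf; exists i.
- by move=> z a _; apply: hsum.
Qed.

(* [ext v u] with position [p] deleted, [u] taking the freed place when
   [p < k]; the default [i0] of [shrink_index p q] is reached only for [q = p] *)
Definition shrink (p : 'I_k.+1) (v : {ffun 'I_k -> 'I_n}) u : {ffun 'I_k -> 'I_n} :=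
  if unlift ord_max p is Some j then subst v j u else v.

Definition shrink_index (p q : 'I_k.+1) : 'I_k :=
  if unlift ord_max q is Some j then j else odflt i0 (unlift ord_max p).

Lemma ext_shrink v u (p q : 'I_k.+1) : q != p -> ext v u q = shrink p v u (shrink_index p q).
Proof.
rewrite /shrink /shrink_index.
case: (unliftP ord_max q) => [j ->|->]; case: (unliftP ord_max p) => [j' ->|->] //= qp.
- rewrite ext_lift /subst ffunE; case: eqP => // jj'.
  by move: qp; rewrite jj' eqxx.
- by rewrite ext_lift.
- by rewrite ext_max /subst ffunE eqxx.
- by rewrite eqxx in qp.
Qed.

Lemma same_evals_ext t :
  (forall v w : {ffun 'I_k -> 'I_n}, wl_eq t G H v w -> same_evals t v w) ->
  forall (v w : {ffun 'I_k -> 'I_n}) u u', wl_eq t G H v w ->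
  atp G (ext v u) = atp H (ext w u') ->
  (forall i, wl_eq t G H (subst v i u) (subst w i u')) -> same_evals t (ext v u) (ext w u').
Proof.
move=> wl_same v w u u' vw hatp vw_subst.
apply: same_evals_of_sums => // z a [hz va] sa rho nuG nuH hf.
(* only the k variables other than z can be free, so some position p is unused *)
pose z' := Ordinal hz.
have [p p_unused] := exists_notin_codom (fun j => rho (lift z' j)).
have free_ne x : is_free x (TSum z a) -> rho x != p.
  move=> hx; have xk : (x < k.+1)%N := is_free_lt (e := TSum z a) (conj hz va) hx.
  have : Ordinal xk != z' by apply/eqP => /(congr1 val) /=; case: hx.
  case: (unliftP z' (Ordinal xk)) => [j hj _|->]; last by rewrite eqxx.
  have -> : x = lift z' j by rewrite -hj.
  by apply: contraNneq p_unused => <-; apply: codom_f.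
have shrink_wl : wl_eq t G H (shrink p v u) (shrink p w u') by rewrite /shrink; case: unlift.
apply: (wl_same _ _ shrink_wl (TSum z a) (conj hz va) sa (shrink_index p \o rho)) => x hx.
by have [-> ->] := hf x hx; rewrite !(ext_shrink _ _ (free_ne x hx)).
Qed.

Lemma same_evals_wl t (v w : {ffun 'I_k -> 'I_n}) : wl_eq t G H v w -> same_evals t v w.
Proof.
elim: t v w => [|t IH] v w vw.
  by apply: same_evals_of_sums => [|z a _ //]; apply: wl_eq_atp vw.
have [vw_t [sigma hsigma]] := vw.
apply: same_evals_of_sums => [|z a [hz va] sa rho nuG nuH hf /=]; first exact: wl_eq_atp vw.
rewrite [in RHS](reindex_inj (@perm_inj _ sigma)); apply: eq_bigr => c _.
have [hatp hsubst] := hsigma c.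
apply: (same_evals_ext IH vw_t hatp hsubst va sa
          (rho := fun x => if x == z then ord_max else lift ord_max (rho x))) => x hx.
rewrite /upd; case: eqP => [_|/eqP xz]; first by rewrite !ext_max.
by rewrite !ext_lift; apply: hf; split => //; apply/eqP.
Qed.

Lemma eval_sentence t (pi : {perm {ffun 'I_k -> 'I_n}}) :
  (forall v, wl_eq t G H v (pi v)) ->
  forall e, vars_lt k.+1 e -> (sd e <= t.+1)%N -> Defs.closed e ->
  forall nuG nuH, eval G nuG e = eval H nuH e.
Proof.
move=> hpi; elim => /=.
1-3: by move=> a b _ _ /(_ a); case; left.
- by move=> s a _ _ /(_ a); case.
- move=> a IHa b IHb [va vb] /[!geq_max] /andP [sa sb] cl nuG nuH.
  by rewrite (IHa va sa _ nuG nuH) ?(IHb vb sb _ nuG nuH) // => x hx;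
    apply: (cl x) => /=; tauto.
- move=> a IHa b IHb [va vb] /[!geq_max] /andP [sa sb] cl nuG nuH.
  by rewrite (IHa va sa _ nuG nuH) ?(IHb vb sb _ nuG nuH) // => x hx;
    apply: (cl x) => /=; tauto.
- by move=> c a IHa va sa cl nuG nuH; rewrite (IHa va sa cl nuG nuH).
- move=> p f args IH va /bigmax_leqP sa cl nuG nuH; congr f; apply: funext => i.
  by apply: (IH i (va i) (sa i isT)) => x hx; apply: (cl x); exists i.
move=> z a _ [hz va] sa cl nuG nuH.
have only_z x : is_free x a -> x = z.
  by move=> hx; apply: contra_notP (cl x) => xz; split.
(* a sum over one vertex is a sum over the constant k-tuples, which pi preserves *)
rewrite (big_const_tuple _ i0) [in RHS](big_const_tuple _ i0).
rewrite [in RHS](reindex_inj (@perm_inj _ pi)).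
apply: eq_big => [v|v _].
  have [hE _] := (atpP _ _ _ _).1 (wl_eq_atp (hpi v)).
  by apply: eq_forallb => j; have [-> _] := hE j i0.
apply: (same_evals_wl (hpi v) va sa (rho := fun=> i0)) => x /only_z ->.
by rewrite /upd eqxx.
Qed.

End UpperInclusion.

Lemma if_R1_R0_inj (b1 b2 : bool) :
  (if b1 then R1 else R0) = (if b2 then R1 else R0) -> b1 = b2.
Proof. by case: b1; case: b2 => // h; case: R1_neq_R0; [exact: h | exact: esym h]. Qed.

Definition transp (i j x : nat) := if x == i then j else if x == j then i else x.

Lemma transpK i j : involutive (transp i j).
Proof.
move=> x; rewrite /transp; case: (eqVneq x i) => [->|xi].
  by case: (eqVneq j i) => [->|ji]; rewrite ?eqxx.
by case: (eqVneq x j) => [->|xj]; rewrite ?eqxx // (negbTE xi) (negbTE xj).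
Qed.

Lemma transp_lt i j m x : (i < m)%N -> (j < m)%N -> (x < m)%N -> (transp i j x < m)%N.
Proof. by rewrite /transp; case: eqP => _; [|case: eqP]. Qed.

Lemma tval_ext_transp n nu k (v : {ffun 'I_k -> 'I_n}) u (i : 'I_k) x : (x < k)%N ->
  tval nu (ext v u) (transp i k x) = tval nu (subst v i u) x.
Proof.
move=> xk; rewrite (tval_lt _ _ xk) /subst ffunE /transp.
case: (eqVneq x i) => [xi|xi].
  have -> : Ordinal xk == i by apply/eqP/val_inj.
  rewrite (tval_lt _ _ (ltnSn k)) -[RHS](ext_max v u).
  by apply: congr1; apply: val_inj.
have -> : (Ordinal xk == i) = false by apply/negbTE; apply: contra_neq xi => <-.
rewrite (ltn_eqF xk) (tval_lt _ _ (leqW xk)) -(ext_lift v u).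
by apply: congr1; apply: val_inj; rewrite /= /bump leqNgt xk.
Qed.

Section LowerInclusion.
Variables (n l k : nat) (Omega : fun_collection) (G H : graph n l) (d0 : 'I_n).

Definition TL_fv t m (e : tl l) := TL k.+1 t Omega e /\ (forall x, is_free x e -> (x < m)%N).

Lemma TL_fv_one t m : (0 < m)%N -> TL_fv t m (TEq 0 0).
Proof. by move=> m_gt0; split => // x [->|->]. Qed.

Lemma TL_fv_mul t m a b : TL_fv t m a -> TL_fv t m b -> TL_fv t m (TMul a b).
Proof.
move=> [[va [sa ua]] fa] [[vb [sb ub]] fb].
by split; [rewrite /TL /= geq_max sa sb | move=> x /= [/fa|/fb]].
Qed.

Lemma TL_fv_add t m a b : TL_fv t m a -> TL_fv t m b -> TL_fv t m (TAdd a b).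
Proof.
move=> [[va [sa ua]] fa] [[vb [sb ub]] fb].
by split; [rewrite /TL /= geq_max sa sb | move=> x /= [/fa|/fb]].
Qed.

Lemma perm_of_TL_fv_sums t m (T : finType) (nuG nuH : T -> nat -> 'I_n) : (0 < m)%N ->
  (forall e, TL_fv t m e ->
     \big[Rplus/R0]_(a : T) eval G (nuG a) e = \big[Rplus/R0]_(a : T) eval H (nuH a) e) ->
  exists s : {perm T}, forall a e, TL_fv t m e -> eval G (nuG a) e = eval H (nuH (s a)) e.
Proof.
move=> m_gt0 hsum.
pose val s e := match s with inl a => eval G (nuG a) e | inr a => eval H (nuH a) e end.
pose A f := exists2 e, TL_fv t m e & f =1 val^~ e.
have [|||||s hs] := @separating_algebra_perm T A.
- by exists (TEq 0 0); [apply: TL_fv_one | case=> a /=; rewrite eqxx].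
- move=> f g [a ta fa] [b tb gb].
  by exists (TMul a b); [apply: TL_fv_mul | case=> x; rewrite fa gb].
- move=> f g [a ta fa] [b tb gb].
  by exists (TAdd a b); [apply: TL_fv_add | case=> x; rewrite fa gb].
- by move=> c f [a ta fa]; exists (TScal c a) => // - [] x; rewrite fa.
- move=> f [e te fe].
  by under eq_bigr do rewrite fe; under [RHS]eq_bigr do rewrite fe; apply: hsum.
exists s => a e te; exact: (hs a (val^~ e) (ex_intro2 _ _ e te (fun=> erefl))).
Qed.

Definition agree t m (x y : {ffun 'I_m -> 'I_n}) :=
  forall e, TL_fv t m e -> eval G (tval (fun=> d0) x) e = eval H (tval (fun=> d0) y) e.

Lemma agree_le t t' m (x y : {ffun 'I_m -> 'I_n}) : (t' <= t)%N -> agree t x y -> agree t' x y.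
Proof.
by move=> tt' xy e [[ve [se ue]] fe]; apply: xy; do !split => //; apply: leq_trans se tt'.
Qed.

Lemma atp_of_agree t m (x y : {ffun 'I_m -> 'I_n}) :
  (m <= k.+1)%N -> agree t x y -> atp G x = atp H y.
Proof.
move=> mk xy; have ak (a : 'I_m) : (a < k.+1)%N by apply: leq_trans mk.
apply/atpP; split => [a b|a s].
  split; apply: if_R1_R0_inj; rewrite -!(tval_ord (fun=> d0)).
    by apply: (xy (TEq a b)); do !split => // z [->|->].
  by apply: (xy (TEdge a b)); do !split => // z [->|->].
rewrite -!(tval_ord (fun=> d0)); apply: (xy (TLab s a)).
by split; [split; [exact: ak | done] | move=> z ->].
Qed.

Lemma wl_eq_of_agree t (v w : {ffun 'I_k -> 'I_n}) : agree t v w -> wl_eq t G H v w.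
Proof.
elim: t v w => [|t IH] v w vw /=; first exact: atp_of_agree (leqnSn k) vw.
split; first by apply/IH/(agree_le (leqnSn t)).
have ext_sums e : TL_fv t k.+1 e ->
    \big[Rplus/R0]_(u : 'I_n) eval G (tval (fun=> d0) (ext v u)) e =
    \big[Rplus/R0]_(u : 'I_n) eval H (tval (fun=> d0) (ext w u)) e.
  move=> [[ve [se ue]] fe]; under eq_bigr do rewrite tval_ext.
  under [RHS]eq_bigr do rewrite tval_ext.
  apply: (vw (TSum k e)); split; first by do !split.
  by move=> x /= [xk /fe]; rewrite ltnS leq_eqVlt (negbTE (introN eqP xk)).
have [sigma hsigma] := perm_of_TL_fv_sums (ltn0Sn k) ext_sums.
exists sigma => u; split; first by apply: (atp_of_agree (leqnn _)) => e; apply: hsigma.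
move=> i; apply: IH => e [[ve [se ue]] fe].
have ik : (i < k.+1)%N by apply: leqW.
have transp_k x : (x < k.+1)%N -> (transp i k x < k.+1)%N by apply: transp_lt.
have e'_fv : TL_fv t k.+1 (rename (transp i k) e).
  have ve' := vars_lt_rename transp_k ve.
  split; last by move=> x; apply: is_free_lt ve'.
  by split; [exact: ve' | rewrite sd_rename; split; last exact: uses_only_rename].
have ren_eval gr (x : {ffun 'I_k -> 'I_n}) c :
    eval gr (tval (fun=> d0) (ext x c) \o transp i k) e =
    eval gr (tval (fun=> d0) (subst x i c)) e.
  by apply: eq_eval_free => y /fe; apply: tval_ext_transp.
by rewrite -!ren_eval -!eval_rename; [apply: hsigma | apply: (can_inj (transpK i k))..].
Qed.

Lemma gwl_eq_of_rho0 t : (0 < k)%N -> rho0_TL (TL k.+1 (t + k) Omega) G H -> gwl_eq k t G H.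
Proof.
move=> k_gt0 hrho.
have tuple_sums e : TL_fv t k e ->
    \big[Rplus/R0]_(v : {ffun 'I_k -> 'I_n}) eval G (tval (fun=> d0) v) e =
    \big[Rplus/R0]_(v : {ffun 'I_k -> 'I_n}) eval H (tval (fun=> d0) v) e.
  move=> [[ve [se ue]] fe]; rewrite -!eval_tsum_prefix; apply: hrho.
    split; first exact: vars_lt_tsum_prefix.
    by rewrite sd_tsum_prefix leq_add2r; split; last exact: uses_only_tsum_prefix.
  by move=> x /is_free_tsum_prefix [/fe]; rewrite ltnNge => /negP.
have [pi hpi] := perm_of_TL_fv_sums k_gt0 tuple_sums.
by exists pi => v; apply: wl_eq_of_agree => e; apply: hpi.
Qed.

End LowerInclusion.

Theorem mainTheorem6 (n l : nat) (hn : (0 < n)%N) (hl : (0 < l)%N)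
  (t k : nat) (hk : (1 <= k)%N) (Omega : fun_collection)
  (hOmega : forall f, Omega f -> (0 < projT1 f)%N) :
  (forall G H : graph n l,
     rho0_TL (@TL l k.+1 (t + k) Omega) G H -> gwl_eq k t G H) /\
  (forall G H : graph n l,
     gwl_eq k t G H -> rho0_TL (@TL l k.+1 t.+1 Omega) G H).
Proof.
split=> G H; first exact: (gwl_eq_of_rho0 (Ordinal hn) hk).
move=> [pi hpi] e [ve [se _]] cl nu.
exact: (eval_sentence (Ordinal hk) hpi ve se cl nu nu).
Qed.
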